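(* Let $F$ be a field of characteristic $0$, $V$ an $n$-dimensional $F$-vector space, $G\le\mathrm{GL}(V)$ a finite group generated by pseudo-reflections, and $M$ an $r$-dimensional $F[G]$-module with $M^G=0$. For $1\le i,j\le r$ let $L_{ij}\in\mathrm{S}(V)^G$ be the element with $d_i^*\delta_j^*+\delta_j^*d_i^*=\partial_{L_{ij}}$ on $\mathrm{S}(V^* )\otimes\wedge M^*$. Then each $L_{ij}$ is homogeneous of positive degree, and each $d_i^*$ maps $\mathcal{H}(\mathrm{S}(V^* )\otimes\wedge M^* )$ into itself.
   Context: $G$ acts contragrediently on $V^*,M^*$ and diagonally on tensor products of symmetric algebras $\mathrm{S}(\cdot)$ and exterior algebras $\wedge(\cdot)$. $(\mathrm{S}(V)\otimes M^* )^G$ and $(\mathrm{S}(V)\otimes M)^G$ are free $\mathrm{S}(V)^G$-modules with homogeneous bases $\tilde\omega_1^{M^*},\dots,\tilde\omega_r^{M^*}$ and $\tilde\omega_1^{M},\dots,\tilde\omega_r^{M}$ respectively. For $s\in\mathrm{S}(V)$, $\partial_s$ is the constant-coefficient differential operator on $\mathrm{S}(V^* )$ ($\partial_v$ the derivation with $\partial_v\lambda=\lambda(v)$, extended multiplicatively; $s\mapsto\partial_s$ is injective), acting as $\partial_s\otimes\mathrm{id}$. $\epsilon_\mu$ is left exterior multiplication by $\mu\in M^*$ and $\iota_m$ ($m\in M$) is the anti-derivation of $\wedge M^*$ with $\iota_m(\xi)=\xi(m)$. If $\tilde\omega_i^{M^*}=\sum_k s_k\otimes\mu_k$ then $d_i^*=\sum_k\partial_{s_k}\otimes\epsilon_{\mu_k}$;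 if $\tilde\omega_j^M=\sum_kt_k\otimes m_k$ then $\delta_j^*=\sum_k\partial_{t_k}\otimes\iota_{m_k}$. $\mathcal{J}_M\subset\mathrm{S}(V)\otimes\wedge M$ is the ideal generated by homogeneous $G$-invariants of positive degree. The pairing $\mathrm{S}(V^* )\otimes\wedge M^*\times\mathrm{S}(V)\otimes\wedge M\to F$ is $\langle f\otimes\nu,s\otimes\ell\rangle=\langle f,s\rangle\langle\nu,\ell\rangle$ with $\langle\lambda_1\cdots\lambda_k,v_1\cdots v_l\rangle=\delta_{kl}\sum_{\sigma\in\mathfrak{S}_k}\prod_i\lambda_i(v_{\sigma(i)})$ and $\langle\xi_1\wedge\cdots\wedge\xi_k,m_1\wedge\cdots\wedge m_l\rangle=\delta_{kl}\det(\xi_i(m_j))$; $\mathcal{H}(\mathrm{S}(V^* )\otimes\wedge M^* )=\{\omega:\langle\omega,\xi\rangle=0\ \forall\xi\in\mathcal{J}_M\}$. *)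

From HB Require Import structures.
From mathcomp Require Import all_boot all_order all_algebra all_fingroup.
From mathcomp Require Import mxrepresentation.
From mathcomp Require Export mpoly.

Set Implicit Arguments.
Unset Strict Implicit.
Unset Printing Implicit Defensive.

Import GRing.Theory.
Local Open Scope ring_scope.

(* Conventions:
   V = F^n with basis e_0..e_{n-1}; S(V) = {mpoly F[n]} with 'X_k <-> e_k.
   V^* has the dual basis; S(V^* ) = {mpoly F[n]} with 'X_k <-> e_k^*.
   M = F^r with basis m_0..m_{r-1}; M^* has the dual basis m_a^*.
   An element of S(V)(x)M (resp. S(V)(x)M^* ) is x = sum_a x a (x) m_a
   (resp. m_a^* ), stored as {ffun 'I_r -> {mpoly F[n]}}.
   An element of S(V)(x)/\M (resp. S(V^* )(x)/\M^* ) is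
   x = sum_S x S (x) m_S, with m_S = m_{s1} /\ ... /\ m_{sk}, s1 < ... < sk,
   stored as {ffun {set 'I_r} -> {mpoly F[n]}}.
   A group element g acts on V by the matrix rV g (on row vectors:
   e_k |-> sum_l rV g k l e_l) and on M by rM g. *)

Section Defs.
Variables (F : fieldType) (n r : nat).
Local Notation P := {mpoly F[n]}.

Definition ext := {ffun {set 'I_r} -> P}.

Definition pseudo_reflection (A : 'M[F]_n) : bool := \rank (A - 1%:M) == 1%N.

Definition actS (A : 'M[F]_n) (p : P) : P :=
  p \mPo [tuple \sum_(l < n) A k l *: 'X_l | k < n].

(* sign of m_S /\ m_T = wsign S T m_{S :|: T} for disjoint S, T *)
Definition wsign (S T : {set 'I_r}) : P :=
  (-1) ^+ #|[set p : 'I_r * 'I_r | [&& p.1 \in S, p.2 \in T & (p.2 < p.1)%N]]|.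

Definition wedge (x y : ext) : ext :=
  [ffun U => \sum_(S : {set 'I_r})
               \sum_(T : {set 'I_r} | [disjoint S & T] && (S :|: T == U))
                 wsign S T * x S * y T].

Definition ext_one : ext := [ffun S => (S == set0)%:R].

Definition ext1 (v : 'I_r -> P) : ext :=
  [ffun S => \sum_(a : 'I_r | S == [set a]) v a].

Definition ext_map (f : P -> P) (x : ext) : ext := [ffun S => f (x S)].

(* constant coefficient differential operator partial_s on S(V^* ):
   partial_{e_k} = d/d('X_k) *)
Definition Dop (s : P) (f : P) : P :=
  \sum_(m <- msupp s) s@_m *: mderivm m f.

Definition eps (a : 'I_r) (x : ext) : ext :=
  wedge (ext1 (fun b => (b == a)%:R)) x.

(* iota_{m_a} : the anti-derivation of /\M^* with iota_{m_a}(m_b^* ) = delta_ab *)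
Definition iota (a : 'I_r) (x : ext) : ext :=
  [ffun U : {set 'I_r} => if a \in U then 0
             else (-1) ^+ #|[set u in U | (u < a)%N]| * x (a |: U)].

(* d^* and delta^* associated to sum_a w a (x) m_a^* and sum_a w a (x) m_a *)
Definition dstar (w : {ffun 'I_r -> P}) (x : ext) : ext :=
  \sum_(a < r) eps a (ext_map (Dop (w a)) x).

Definition deltastar (w : {ffun 'I_r -> P}) (x : ext) : ext :=
  \sum_(a < r) iota a (ext_map (Dop (w a)) x).

(* the pairing S(V^* ) x S(V) -> F in coordinates:
   <Y^alpha, X^beta> = delta_{alpha beta} alpha! *)
Definition polypair (f s : P) : F :=
  \sum_(m <- msupp f) f@_m * s@_m * (\prod_(i < n) (m i)`!)%:R.

Definition extpair (x y : ext) : F := \sum_(S : {set 'I_r}) polypair (x S) (y S).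

Definition ext_homog (e : nat) (x : ext) : Prop :=
  forall S, x S != 0 -> (#|S| <= e)%N /\ x S \is (e - #|S|)%N.-homog.

Section Group.
Variables (gT : finGroupType) (G : {group gT}).
Variables (rV : mx_representation F G n) (rM : mx_representation F G r).

Definition invS (p : P) : Prop := forall g, g \in G -> actS (rV g) p = p.

Definition actM (g : gT) (x : {ffun 'I_r -> P}) : {ffun 'I_r -> P} :=
  [ffun b => \sum_(a < r) rM g a b *: actS (rV g) (x a)].

(* diagonal action on S(V)(x)M^* (contragredient on M^* ) *)
Definition actMs (g : gT) (x : {ffun 'I_r -> P}) : {ffun 'I_r -> P} :=
  [ffun b => \sum_(a < r) rM (g^-1)%g b a *: actS (rV g) (x a)].

Definition actE (g : gT) (x : ext) : ext :=
  \sum_(S : {set 'I_r})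
     ext_map (fun c => actS (rV g) (x S) * c)
       (\big[wedge/ext_one]_(s <- enum S) ext1 (fun b => (rM g s b)%:MP)).

Definition invM (x : {ffun 'I_r -> P}) : Prop := forall g, g \in G -> actM g x = x.
Definition invMs (x : {ffun 'I_r -> P}) : Prop := forall g, g \in G -> actMs g x = x.
Definition invE (x : ext) : Prop := forall g, g \in G -> actE g x = x.

Definition hom_basis (inv : {ffun 'I_r -> P} -> Prop)
    (w : 'I_r -> {ffun 'I_r -> P}) : Prop :=
  [/\ forall i, inv (w i),
      forall i, exists d, forall a, w i a \is d.-homog,
      forall x, inv x -> exists c : 'I_r -> P,
          (forall i, invS (c i)) /\ x = [ffun a => \sum_(i < r) c i * w i a]
    & forall c : 'I_r -> P, (forall i, invS (c i)) ->
          [ffun a => \sum_(i < r) c i * w i a] = 0 -> forall i, c i = 0].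

Definition no_fixed_points : Prop :=
  forall v : 'rV[F]_r, (forall g, g \in G -> v *m rM g = v) -> v = 0.

(* membership in the ideal J_M of S(V)(x)/\M generated by the homogeneous
   G-invariants of positive degree *)
Definition inJ (xi : ext) : Prop :=
  exists k (a b c : 'I_k -> ext),
    (forall i, invE (b i) /\ exists2 e, (0 < e)%N & ext_homog e (b i)) /\
    xi = \sum_(i < k) wedge (wedge (a i) (b i)) (c i).

Definition harmonic (x : ext) : Prop := forall xi, inJ xi -> extpair x xi = 0.

End Group.
End Defs.

(* Both claims are proved by duality.  The pairing of S(V^* ) with S(V) is
   perfect in characteristic 0 and makes [Dop s] adjoint to multiplication
   by s; hence s |-> Dop s is injective and multiplicative.  Evaluating the
   anticommutator on f (x) 1 gives Dop L f = sum_b Dop (wM j b) (Dop (wMs i b) f),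
   so L = sum_b wMs i b * wM j b is homogeneous of degree deg (wMs i) + deg (wM j),
   and deg (wM j) > 0 because M^G = 0 leaves no constant invariants in S(V) (x) M.
   Likewise d_i^* is adjoint to the contraction C = sum_a w_a iota_a with
   w = wMs i.  C is a G-equivariant anti-derivation lowering the exterior degree
   by one and raising the polynomial degree by deg w > 0 (averaging over G shows
   (M^* )^G = 0 too), so it maps every generator a /\ b /\ c of J_M back into J_M;
   therefore d_i^* preserves the annihilator H of J_M. *)

From Pilot Require Import Defs.
From HB Require Import structures.
From mathcomp Require Import all_boot all_order all_algebra all_fingroup.
From mathcomp Require Import mxrepresentation mpoly.
From mathcomp Require Import ring zify.

Set Implicit Arguments.
Unset Strict Implicit.
Unset Printing Implicit Defensive.

Import GRing.Theory.
Local Open Scope ring_scope.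

Section Pairing.
Variables (F : fieldType) (n : nat).
Local Notation P := {mpoly F[n]}.
Implicit Types (f g p s t : P) (m : 'X_{1..n}).

Definition mfact m : F := (\prod_(i < n) (m i)`!)%:R.

Lemma big_msupp_widen p (G : 'X_{1..n} -> F) (l : seq 'X_{1..n}) :
  uniq l -> {subset msupp p <= l} -> (forall m, p@_m = 0 -> G m = 0) ->
  \sum_(m <- msupp p) G m = \sum_(m <- l) G m.
Proof.
move=> ul sub G0; rewrite [RHS](bigID (mem (msupp p))) /=.
rewrite [X in _ = _ + X]big1 ?addr0 => [|m /memN_msupp_eq0 /G0 //].
rewrite -[in RHS]big_filter; apply/perm_big/uniq_perm; rewrite ?filter_uniq //.
by move=> m; rewrite mem_filter; case: (boolP (m \in msupp p)) => // /sub ->.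
Qed.

Lemma polypairE f s (l : seq 'X_{1..n}) :
  uniq l -> {subset msupp f <= l} ->
  polypair f s = \sum_(m <- l) f@_m * s@_m * mfact m.
Proof. by move=> ul sub; apply: big_msupp_widen => // m ->; rewrite !mul0r. Qed.

Lemma polypairC f s : polypair f s = polypair s f.
Proof.
pose l := undup (msupp f ++ msupp s).
have ul : uniq l by apply: undup_uniq.
rewrite (@polypairE f s l) => [||m fm]; rewrite ?mem_undup ?mem_cat ?fm //.
rewrite (@polypairE s f l) => [||m sm]; rewrite ?mem_undup ?mem_cat ?sm ?orbT //.
by apply: eq_bigr => m _; rewrite (mulrC f@_m).
Qed.

Lemma polypair_is_zmod_morphism f : zmod_morphism (polypair f).
Proof.
by move=> s t; rewrite /polypair -sumrB; apply: eq_bigr => m _; rewrite mcoeffB; ring.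
Qed.
HB.instance Definition _ f :=
  GRing.isZmodMorphism.Build P F (polypair f) (polypair_is_zmod_morphism f).

Lemma polypairZr c f s : polypair f (c *: s) = c * polypair f s.
Proof. by rewrite /polypair mulr_sumr; apply: eq_bigr => m _; rewrite mcoeffZ; ring. Qed.

Lemma polypairZl c f s : polypair (c *: f) s = c * polypair f s.
Proof. by rewrite polypairC polypairZr polypairC. Qed.

Lemma polypairDl f g s : polypair (f + g) s = polypair f s + polypair g s.
Proof. by rewrite !(polypairC _ s) raddfD. Qed.

Lemma polypair0l s : polypair 0 s = 0.
Proof. by rewrite polypairC raddf0. Qed.

Lemma polypair_suml I (rs : seq I) (Q : pred I) (f : I -> P) s :
  polypair (\sum_(i <- rs | Q i) f i) s = \sum_(i <- rs | Q i) polypair (f i) s.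
Proof. exact: (big_morph (fun f => polypair f s) (fun f g => polypairDl f g s) (polypair0l s)). Qed.

Lemma polypair_signl k f s : polypair ((-1) ^+ k * f) s = (-1) ^+ k * polypair f s.
Proof.
rewrite -signr_odd -[in RHS]signr_odd; case: odd; rewrite /= ?expr0 ?expr1 !(mul1r, mulN1r) //.
by rewrite polypairC raddfN polypairC.
Qed.

Lemma polypair_signr k f s : polypair f ((-1) ^+ k * s) = (-1) ^+ k * polypair f s.
Proof. by rewrite polypairC polypair_signl polypairC. Qed.

Lemma polypairXl m s : polypair 'X_[m] s = s@_m * mfact m.
Proof. by rewrite /polypair msuppX big_seq1 mcoeffX eqxx mul1r. Qed.

Lemma polypair_mderivmX (u a c : 'X_{1..n}) :
  polypair (mderivm u ('X_[a] : P)) 'X_[c] = polypair 'X_[a] ('X_[u] * 'X_[c]).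
Proof.
rewrite mderivmX polypairZl !polypairXl -mpolyXD !mcoeffX.
have [<-|neq] := eqVneq (u + c)%MM a.
  rewrite addmC addmK eqxx !mul1r -natrM -big_split /=; congr _%:R.
  by apply: eq_bigr => i _; rewrite mnmDE -{2}(addnK (u i) (c i)) ffact_fact ?leq_addl.
rewrite mul0r; case: eqP => [ac|_]; last by rewrite mul0r mulr0.
have [/forallP le_ua|] := boolP [forall i, u i <= a i]%N.
  by case/eqP: neq; apply/mnmP => i; rewrite mnmDE ac mnmBE subnKC.
rewrite negb_forall => /existsP [i]; rewrite -ltnNge => lt_au.
by rewrite (bigD1 i) //= ffact_small // mul0n mulr0n mul0r.
Qed.

Lemma polypair_mderivm (u : 'X_{1..n}) f p : polypair (mderivm u f) p = polypair f ('X_[u] * p).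
Proof.
rewrite [f]mpolyE raddf_sum !polypair_suml; apply: eq_bigr => a _.
rewrite /= mderivmZ !polypairZl; congr (_ * _).
rewrite [p]mpolyE mulr_sumr !raddf_sum /=; apply: eq_bigr => c _.
by rewrite -scalerAr !polypairZr polypair_mderivmX.
Qed.

Lemma Dop_is_zmod_morphism s : zmod_morphism (Dop s).
Proof.
by move=> f g; rewrite /Dop -sumrB; apply: eq_bigr => m _; rewrite mderivmB scalerBr.
Qed.
HB.instance Definition _ s :=
  GRing.isZmodMorphism.Build P P (Dop s) (Dop_is_zmod_morphism s).

Lemma polypair_Dop s f p : polypair (Dop s f) p = polypair f (s * p).
Proof.
rewrite polypair_suml [in RHS](mpolyE s) mulr_suml raddf_sum /=.
by apply: eq_bigr => m _; rewrite polypairZl -scalerAl polypairZr polypair_mderivm.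
Qed.

Section CharZero.
Hypothesis F0 : [pchar F] =i pred0.

Lemma mfact_neq0 m : mfact m != 0.
Proof.
by rewrite /mfact ((pcharf0P F).1 F0) -lt0n prodn_gt0 // => i; rewrite fact_gt0.
Qed.

Lemma polypair_injr s t : (forall f, polypair f s = polypair f t) -> s = t.
Proof.
by move=> eq_st; apply/mpolyP => m; apply: (mulIf (mfact_neq0 m)); rewrite -!polypairXl.
Qed.

Lemma polypair_injl f g : (forall s, polypair f s = polypair g s) -> f = g.
Proof. by move=> eq_fg; apply: polypair_injr => p; rewrite polypairC eq_fg polypairC. Qed.

Lemma DopM s t f : Dop (s * t) f = Dop s (Dop t f).
Proof. by apply: polypair_injl => p; rewrite !polypair_Dop mulrCA mulrA. Qed.

Lemma Dop_suml I (rs : seq I) (Q : pred I) (s : I -> P) f :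
  Dop (\sum_(i <- rs | Q i) s i) f = \sum_(i <- rs | Q i) Dop (s i) f.
Proof.
apply: polypair_injl => p; rewrite polypair_Dop polypair_suml mulr_suml raddf_sum.
by apply: eq_bigr => i _; rewrite polypair_Dop.
Qed.

Lemma Dop_inj s t : (forall f, Dop s f = Dop t f) -> s = t.
Proof.
by move=> eq_st; apply: polypair_injr => f; rewrite -[s]mulr1 -[t]mulr1 -!polypair_Dop eq_st.
Qed.

End CharZero.
End Pairing.

Ltac parity :=
  rewrite ?oddD /=; repeat match goal with |- context [odd ?t] => case: (odd t) end.

Section Signs.
Variables (R : comRingType) (X Y : R).

Lemma signed_terms_eq (k1 k2 l1 l2 : nat) :
  odd (k1 + k2) = odd (l1 + l2) ->
  (-1) ^+ k1 * ((-1) ^+ k2 * X * Y) = (-1) ^+ l1 * ((-1) ^+ l2 * X) * Y.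
Proof.
move=> e; transitivity ((-1) ^+ (k1 + k2) * X * Y); first by rewrite exprD; ring.
by rewrite -signr_odd e signr_odd exprD; ring.
Qed.

Lemma signed_terms_eq3 (k1 k2 l1 l2 l3 : nat) :
  odd (k1 + k2) = odd (l1 + l2 + l3) ->
  (-1) ^+ k1 * ((-1) ^+ k2 * X * Y) = (-1) ^+ l1 * ((-1) ^+ l2 * X) * ((-1) ^+ l3 * Y).
Proof.
move=> e; transitivity ((-1) ^+ (k1 + k2) * X * Y); first by rewrite exprD; ring.
by rewrite -signr_odd e signr_odd !exprD; ring.
Qed.

Lemma signed_terms_cancel (k1 k2 l1 l2 l3 : nat) :
  odd (l1 + l2 + l3) = ~~ odd (k1 + k2) ->
  (-1) ^+ k1 * ((-1) ^+ k2 * X) * Y + (-1) ^+ l1 * ((-1) ^+ l2 * X) * ((-1) ^+ l3 * Y) = 0.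
Proof.
move=> e; transitivity (((-1) ^+ (k1 + k2) + (-1) ^+ (l1 + l2 + l3)) * X * Y).
  by rewrite !exprD; ring.
rewrite -[(-1) ^+ (l1 + _ + _)]signr_odd e -[(-1) ^+ (k1 + k2)]signr_odd.
by case: odd; rewrite /= ?expr0 ?expr1 ?addrN ?addNr !mul0r.
Qed.

End Signs.

Section Exterior.
Variables (F : fieldType) (n r : nat).
Local Notation P := {mpoly F[n]}.
Local Notation E := (ext F n r).
Local Notation iota := (@Defs.iota F n r).
Implicit Types (x y z : E) (p q : P) (S T U : {set 'I_r}) (a b : 'I_r).
Implicit Types (v w : {ffun 'I_r -> P}).

Definition ext_scale p x : E := ext_map ( *%R p) x.
Definition grade_invol x : E := [ffun S : {set 'I_r} => (-1) ^+ #|S| * x S].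
Definition nlt S a := (\sum_(u in S) (u < a))%N.
Definition ngt S a := (\sum_(u in S) (a < u))%N.
Definition ninv S T := (\sum_(s in S) nlt T s)%N.

Lemma ext_scaleE p x S : ext_scale p x S = p * x S.
Proof. by rewrite ffunE. Qed.

Lemma grade_involE x S : grade_invol x S = (-1) ^+ #|S| * x S.
Proof. by rewrite ffunE. Qed.

Lemma card_ltE S a : #|[set u in S | (u < a)%N]| = nlt S a.
Proof.
rewrite -sum1_card /nlt big_mkcond [RHS]big_mkcond; apply: eq_bigr => u _.
by rewrite inE; case: (u \in S); case: (u < a)%N.
Qed.

Lemma wsignE S T : wsign F n S T = (-1) ^+ ninv S T.
Proof.
rewrite /wsign -sum1_card /ninv /nlt pair_big_dep /=; congr (_ ^+ _).
rewrite big_mkcond [RHS]big_mkcond; apply: eq_bigr => -[s t] _.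
by rewrite inE /=; case: (s \in S); case: (t \in T); case: (t < s)%N.
Qed.

Lemma wedgeE x y U : wedge x y U =
  \sum_(S : {set 'I_r} | S \subset U) (-1) ^+ ninv S (U :\: S) * x S * y (U :\: S).
Proof.
rewrite ffunE (bigID (fun S => S \subset U)) /= [X in _ + X]big1 ?addr0; last first.
  by move=> S sSU; rewrite big1 // => T /andP [_ /eqP defU]; rewrite -defU subsetUl in sSU.
apply: eq_bigr => S sSU; rewrite (big_pred1 (U :\: S)) ?wsignE // => T /=.
apply/andP/eqP => [[dST /eqP <-]|->].
  by rewrite setDUl setDv set0U (setDidPl _) // disjoint_sym.
split; last by rewrite -{1}(setIidPr sSU) setID.
by have := subxx (U :\: S); rewrite subsetD disjoint_sym => /andP [].
Qed.

Lemma iotaE a x U :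
  iota a x U = if a \in U then 0 else (-1) ^+ nlt U a * x (a |: U).
Proof. by rewrite ffunE card_ltE. Qed.

Lemma iota_is_zmod_morphism a : zmod_morphism (iota a).
Proof.
by move=> x y; apply/ffunP => U; rewrite !(ffunE, iotaE); case: ifP; rewrite ?subr0 // mulrBr.
Qed.
HB.instance Definition _ a :=
  GRing.isZmodMorphism.Build E E (iota a) (iota_is_zmod_morphism a).

Lemma grade_invol_is_zmod_morphism : zmod_morphism grade_invol.
Proof. by move=> x y; apply/ffunP => U; rewrite !ffunE mulrBr. Qed.
HB.instance Definition _ :=
  GRing.isZmodMorphism.Build E E grade_invol grade_invol_is_zmod_morphism.

Lemma ext_scale_is_zmod_morphism p : zmod_morphism (ext_scale p).
Proof. by move=> x y; apply/ffunP => U; rewrite !ffunE mulrBr. Qed.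
HB.instance Definition _ p :=
  GRing.isZmodMorphism.Build E E (ext_scale p) (ext_scale_is_zmod_morphism p).

Lemma wedge_is_zmod_morphism x : zmod_morphism (wedge x).
Proof.
move=> y z; apply/ffunP => U; rewrite !ffunE -sumrB; apply: eq_bigr => S _.
by rewrite -sumrB; apply: eq_bigr => T _; rewrite !ffunE mulrBr.
Qed.
HB.instance Definition _ x :=
  GRing.isZmodMorphism.Build E E (wedge x) (wedge_is_zmod_morphism x).

Lemma wedgeDl x1 x2 y : wedge (x1 + x2) y = wedge x1 y + wedge x2 y.
Proof.
apply/ffunP => U; rewrite [RHS]ffunE !wedgeE -big_split.
by apply: eq_bigr => S _; rewrite ffunE mulrDr !mulrDl.
Qed.

Lemma wedge0l y : wedge 0 y = 0.
Proof. by apply/ffunP => U; rewrite wedgeE ffunE big1 // => S _; rewrite ffunE mulr0 mul0r. Qed.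

Lemma wedge_suml I (rs : seq I) (Q : pred I) (f : I -> E) y :
  wedge (\sum_(i <- rs | Q i) f i) y = \sum_(i <- rs | Q i) wedge (f i) y.
Proof.
exact: (big_morph (fun x => wedge x y) (fun x1 x2 => wedgeDl x1 x2 y) (wedge0l y)).
Qed.

Lemma ext_scaleDl p q x : ext_scale (p + q) x = ext_scale p x + ext_scale q x.
Proof. by apply/ffunP => U; rewrite !ffunE mulrDl. Qed.

Lemma ext_scale0l x : ext_scale 0 x = 0.
Proof. by apply/ffunP => U; rewrite !ffunE mul0r. Qed.

Lemma ext_scale_suml I (rs : seq I) (Q : pred I) (f : I -> P) x :
  ext_scale (\sum_(i <- rs | Q i) f i) x = \sum_(i <- rs | Q i) ext_scale (f i) x.
Proof.
exact: (big_morph (fun p => ext_scale p x) (fun p q => ext_scaleDl p q x) (ext_scale0l x)).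
Qed.

Lemma ext_scaleA p q x : ext_scale p (ext_scale q x) = ext_scale (p * q) x.
Proof. by apply/ffunP => U; rewrite !ffunE mulrA. Qed.

Lemma ext_scale1 x : ext_scale 1 x = x.
Proof. by apply/ffunP => U; rewrite ffunE mul1r. Qed.

Lemma wedge_scalel p x y : wedge (ext_scale p x) y = ext_scale p (wedge x y).
Proof.
apply/ffunP => U; rewrite ext_scaleE !wedgeE mulr_sumr.
by apply: eq_bigr => S _; rewrite ext_scaleE; ring.
Qed.

Lemma wedge_scaler p x y : wedge x (ext_scale p y) = ext_scale p (wedge x y).
Proof.
apply/ffunP => U; rewrite ext_scaleE !wedgeE mulr_sumr.
by apply: eq_bigr => S _; rewrite ext_scaleE; ring.
Qed.

Lemma iota_scale a p x : iota a (ext_scale p x) = ext_scale p (iota a x).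
Proof.
by apply/ffunP => U; rewrite ext_scaleE !iotaE; case: ifP => _; rewrite ?mulr0 // ext_scaleE; ring.
Qed.

Lemma grade_invol_scale p x : grade_invol (ext_scale p x) = ext_scale p (grade_invol x).
Proof. by apply/ffunP => U; rewrite !(ffunE, ext_scaleE); ring. Qed.

Lemma grade_invol_wedge x y : grade_invol (wedge x y) = wedge (grade_invol x) (grade_invol y).
Proof.
apply/ffunP => U; rewrite grade_involE !wedgeE mulr_sumr; apply: eq_bigr => S sSU.
by rewrite !grade_involE -(cardsID S U) (setIidPr sSU) exprD; ring.
Qed.

Lemma big_sets_mem (V : nmodType) a (Q : pred {set 'I_r}) (G : {set 'I_r} -> V) :
  \sum_(S | Q S && (a \in S)) G S = \sum_(T | Q (a |: T) && (a \notin T)) G (a |: T).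
Proof.
rewrite (reindex_onto (fun T => a |: T) (fun S => S :\ a)) /= => [|S /andP [_]]; last exact: setD1K.
apply: eq_bigl => T; rewrite setU11 andbT.
have [aT|aT] := boolP (a \in T); last by rewrite setU1K // eqxx.
suff /negbTE -> : (a |: T) :\ a != T by rewrite andbF.
by apply/eqP => eqT; rewrite -eqT setD11 in aT.
Qed.

Lemma ninv_setU1l a S T : a \notin S -> ninv (a |: S) T = (nlt T a + ninv S T)%N.
Proof. by move=> aS; rewrite /ninv big_setU1. Qed.

Lemma ninv_setU1r a S T : a \notin T -> ninv S (a |: T) = (ngt S a + ninv S T)%N.
Proof.
by move=> aT; rewrite /ninv /ngt /nlt -big_split; apply: eq_bigr => s _; rewrite big_setU1.
Qed.

Lemma card_nlt_ngt a S : a \notin S -> #|S| = (nlt S a + ngt S a)%N.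
Proof.
move=> aS; rewrite /nlt /ngt -big_split -sum1_card; apply: eq_bigr => s sS /=.
by case: ltngtP => // /val_inj eq_sa; rewrite -eq_sa sS in aS.
Qed.

Lemma nlt_setID a S U : S \subset U -> nlt U a = (nlt S a + nlt (U :\: S) a)%N.
Proof. by move=> sSU; rewrite /nlt (big_setID S) /= (setIidPr sSU). Qed.

Lemma nlt_setU1 a T : nlt (a |: T) a = nlt T a.
Proof.
have [aT|aT] := boolP (a \in T); first by rewrite (setUidPr _) // sub1set.
by rewrite /nlt big_setU1 //= ltnn.
Qed.

(* The terms indexed by T and by a |: T cancel in pairs. *)
Lemma wedge_iota_mem a x y U : a \in U ->
  wedge (iota a x) y U + wedge (grade_invol x) (iota a y) U = 0.
Proof.
move=> aU; rewrite !wedgeE (bigID (fun S => a \in S)) /= big1 ?add0r; last first.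
  by move=> S /andP [_ aS]; rewrite iotaE aS mulr0 mul0r.
rewrite [X in _ + X](bigID (fun S => a \in S)) /= [X in _ + (_ + X)]big1 ?addr0; last first.
  by move=> S /andP [_ aS]; rewrite iotaE !inE aS aU mulr0.
rewrite big_sets_mem [X in _ + X](eq_bigl (fun T => (T \subset U) && (a \notin T))); last first.
  by move=> T; rewrite subUset sub1set aU.
rewrite -big_split big1 // => T /andP [sTU aT] /=.
set W := U :\: (a |: T).
have aW : a \notin W by rewrite !inE eqxx.
have -> : U :\: T = a |: W.
  by apply/setP => u; rewrite !inE; case: eqP => [->|]; rewrite ?aT ?aU.
rewrite grade_involE !iotaE (negbTE aT) (negbTE aW) ninv_setU1r // ninv_setU1l //.
rewrite cardsU1 aT (card_nlt_ngt aT); apply: signed_terms_cancel.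
by parity.
Qed.

Lemma subsetU1_notin a S U :
  a \notin U -> (S \subset a |: U) && (a \notin S) = (S \subset U).
Proof.
move=> aU; apply/andP/idP => [[sSaU aS]|sSU]; last first.
  by split; [apply: subset_trans (subsetU1 a U) | apply: contra aU; apply: (subsetP sSU)].
apply/subsetP => u uS; move/subsetP/(_ u uS): sSaU; rewrite !inE.
by case: eqP => // eua; rewrite -eua uS in aS.
Qed.

Lemma iota_wedge_notin a x y U : a \notin U ->
  iota a (wedge x y) U = wedge (iota a x) y U + wedge (grade_invol x) (iota a y) U.
Proof.
move=> aU; rewrite iotaE (negbTE aU) !wedgeE mulr_sumr (bigID (fun S => a \in S)) /=.
congr (_ + _).
  rewrite big_sets_mem [LHS](eq_bigl (fun T => T \subset U)) => [|T]; last first.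
    by rewrite subUset sub1set setU11 subsetU1_notin.
  apply: eq_bigr => T sTU; have aT : a \notin T by apply: contra aU; apply: (subsetP sTU).
  have -> : (a |: U) :\: (a |: T) = U :\: T.
    by apply/setP => u; rewrite !inE; case: eqP => [->|]; rewrite ?(negbTE aU) ?andbF.
  rewrite iotaE (negbTE aT) ninv_setU1l // (nlt_setID a sTU); apply: signed_terms_eq.
  by parity.
rewrite [LHS](eq_bigl (fun S => S \subset U)) => [|S]; last exact: subsetU1_notin.
apply: eq_bigr => S sSU; have aS : a \notin S by apply: contra aU; apply: (subsetP sSU).
have aUS : a \notin U :\: S by rewrite !inE (negbTE aU) andbF.
have -> : (a |: U) :\: S = a |: (U :\: S).
  by apply/setP => u; rewrite !inE; case: eqP => [->|]; rewrite ?(negbTE aS).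
rewrite grade_involE iotaE (negbTE aUS) ninv_setU1r // (nlt_setID a sSU) (card_nlt_ngt aS).
by apply: signed_terms_eq3; parity.
Qed.

Lemma iota_wedge a x y :
  iota a (wedge x y) = wedge (iota a x) y + wedge (grade_invol x) (iota a y).
Proof.
apply/ffunP => U; rewrite [RHS]ffunE.
have [aU|aU] := boolP (a \in U); last exact: iota_wedge_notin.
by rewrite iotaE aU wedge_iota_mem.
Qed.

Local Notation one := (ext_one F n r).

Lemma wedge1l y : wedge one y = y.
Proof.
apply/ffunP => U; rewrite wedgeE (bigD1 set0) ?sub0set //= ffunE eqxx setD0.
rewrite big1 ?addr0 => [|S /andP [_ nS]]; last by rewrite ffunE (negbTE nS) mulr0 mul0r.
by rewrite /ninv big_set0 mulr1 mul1r.
Qed.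

Lemma iota_one a : iota a one = 0.
Proof.
apply/ffunP => U; rewrite iotaE !ffunE; case: ifP => // _.
suff /negbTE -> : a |: U != set0 by rewrite mulr0.
by apply/set0Pn; exists a; rewrite setU11.
Qed.

Lemma ext1E (v : 'I_r -> P) S :
  ext1 v S = if [pick b | S == [set b]] is Some b then v b else 0.
Proof.
rewrite ffunE; case: pickP => [b /eqP -> | none]; last by rewrite big_pred0.
by rewrite (big_pred1 b) // => c; rewrite /= eqEsubset !sub1set !inE eq_sym andbb.
Qed.

Lemma ext1_set1 (v : 'I_r -> P) b : ext1 v [set b] = v b.
Proof.
rewrite ext1E; case: pickP => [c /eqP /setP /(_ b) | /(_ b)]; last by rewrite eqxx.
by rewrite !inE eqxx => /esym /eqP <-.
Qed.

Lemma iota_ext1 a (v : 'I_r -> P) : iota a (ext1 v) = ext_scale (v a) one.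
Proof.
apply/ffunP => U; rewrite iotaE ext_scaleE [one _]ffunE.
have [->|nU] := eqVneq U set0.
  by rewrite in_set0 setU0 ext1_set1 /nlt big_set0 expr0 mul1r mulr1.
rewrite mulr0; case: ifP => // aU; rewrite ext1E.
case: pickP => [b /eqP eq_b|]; last by rewrite mulr0.
have [u uU] := set0Pn _ nU; have := setU11 a U; rewrite eq_b inE => /eqP eab.
by have := setU1r a uU; rewrite eq_b inE -eab => /eqP eua; rewrite -eua uU in aU.
Qed.

Lemma grade_invol_ext1 (v : 'I_r -> P) : grade_invol (ext1 v) = ext_scale (-1) (ext1 v).
Proof.
apply/ffunP => S; rewrite grade_involE ext_scaleE ext1E.
by case: pickP => [b /eqP -> | _]; rewrite ?cards1 ?mulr0.
Qed.

Lemma epsE a y U : eps a y U =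
  if a \in U then (-1) ^+ nlt (U :\ a) a * y (U :\ a) else 0.
Proof.
rewrite /eps wedgeE.
have ext1_a S : S != [set a] -> ext1 (fun b => (b == a)%:R) S = 0 :> P.
  rewrite ext1E; case: pickP => // b /eqP -> neq.
  by case: eqP => // eba; rewrite eba eqxx in neq.
case: ifPn => aU.
  rewrite (bigD1 [set a]) ?sub1set //= ext1_set1 eqxx big1 ?addr0.
    by rewrite /ninv big_set1 mulr1.
  by move=> S /andP [_ nS]; rewrite ext1_a // mulr0 mul0r.
rewrite big1 // => S sSU; rewrite ext1_a ?mulr0 ?mul0r //.
by apply: contraNneq aU => eqS; rewrite eqS sub1set in sSU.
Qed.

Definition contract (w : {ffun 'I_r -> P}) xi : E :=
  \sum_(a < r) ext_scale (w a) (iota a xi).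

Lemma contractE w x S : contract w x S = \sum_(a < r) w a * iota a x S.
Proof. by rewrite sum_ffunE; apply: eq_bigr => a _; rewrite ext_scaleE. Qed.

Lemma contract_is_zmod_morphism w : zmod_morphism (contract w).
Proof. by move=> x y; rewrite /contract -sumrB; apply: eq_bigr => a _; rewrite !raddfB. Qed.
HB.instance Definition _ w :=
  GRing.isZmodMorphism.Build E E (contract w) (contract_is_zmod_morphism w).

Lemma contract_wedge w x y :
  contract w (wedge x y) = wedge (contract w x) y + wedge (grade_invol x) (contract w y).
Proof.
rewrite /contract wedge_suml raddf_sum -big_split; apply: eq_bigr => a _ /=.
by rewrite iota_wedge raddfD wedge_scalel wedge_scaler.
Qed.

Lemma contract_scale w p x : contract w (ext_scale p x) = ext_scale p (contract w x).
Proof.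
rewrite /contract raddf_sum /=; apply: eq_bigr => a _.
by rewrite iota_scale !ext_scaleA mulrC.
Qed.

Lemma contract_one w : contract w one = 0.
Proof. by rewrite /contract big1 // => a _; rewrite iota_one raddf0. Qed.

Lemma extpair_is_zmod_morphism x : zmod_morphism (extpair x).
Proof. by move=> y z; rewrite /extpair -sumrB; apply: eq_bigr => S _; rewrite !ffunE raddfB. Qed.
HB.instance Definition _ x :=
  GRing.isZmodMorphism.Build E F (extpair x) (extpair_is_zmod_morphism x).

Lemma extpairDl x1 x2 y : extpair (x1 + x2) y = extpair x1 y + extpair x2 y.
Proof. by rewrite /extpair -big_split; apply: eq_bigr => S _; rewrite ffunE polypairDl. Qed.

Lemma extpair0l y : extpair 0 y = 0.
Proof. by rewrite /extpair big1 // => S _; rewrite ffunE polypair0l. Qed.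

Lemma extpair_suml I (rs : seq I) (Q : pred I) (f : I -> E) y :
  extpair (\sum_(i <- rs | Q i) f i) y = \sum_(i <- rs | Q i) extpair (f i) y.
Proof.
exact: (big_morph (fun x => extpair x y) (fun x1 x2 => extpairDl x1 x2 y) (extpair0l y)).
Qed.

Lemma extpair_eps a y xi : extpair (eps a y) xi = extpair y (iota a xi).
Proof.
rewrite /extpair (bigID (fun U => a \in U)) /= [X in _ + X]big1 ?addr0; last first.
  by move=> U aU; rewrite epsE (negbTE aU) polypair0l.
rewrite [RHS](bigID (fun U => a \in U)) /= [X in _ = X + _]big1 ?add0r; last first.
  by move=> U aU; rewrite iotaE aU raddf0.
rewrite (eq_bigl (fun U => true && (a \in U))) // big_sets_mem; apply: eq_bigr => T /= aT.
by rewrite epsE setU11 setU1K // iotaE (negbTE aT) polypair_signl polypair_signr.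
Qed.

Lemma extpair_Dop s x y : extpair (ext_map (Dop s) x) y = extpair x (ext_scale s y).
Proof. by apply: eq_bigr => S _; rewrite !ffunE polypair_Dop. Qed.

Lemma extpair_dstar w x xi : extpair (dstar w x) xi = extpair x (contract w xi).
Proof.
rewrite /dstar extpair_suml raddf_sum; apply: eq_bigr => a _.
by rewrite extpair_eps extpair_Dop.
Qed.

Lemma ext_map_Dop_scale_one s f : ext_map (Dop s) (ext_scale f one) = ext_scale (Dop s f) one.
Proof. by apply/ffunP => U; rewrite !ffunE; case: (U == set0); rewrite ?mulr1 ?mulr0 ?raddf0. Qed.

Lemma dstar0 w : dstar w 0 = 0.
Proof.
rewrite /dstar big1 // => a _.
have -> : ext_map (Dop (w a)) (0 : E) = 0 by apply/ffunP => U; rewrite !ffunE raddf0.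
exact: raddf0.
Qed.

Lemma deltastar_scale_one w f : deltastar w (ext_scale f one) = 0.
Proof.
by rewrite /deltastar big1 // => a _; rewrite ext_map_Dop_scale_one iota_scale iota_one raddf0.
Qed.

Lemma dstar_scale_one_set1 w f b : dstar w (ext_scale f one) [set b] = Dop (w b) f.
Proof.
rewrite /dstar sum_ffunE (bigD1 b) //= big1 ?addr0 => [|a neq_ab]; last first.
  by rewrite epsE inE (negbTE neq_ab).
rewrite ext_map_Dop_scale_one epsE set11 setDv ext_scaleE ffunE eqxx /nlt big_set0.
by rewrite expr0 mul1r mulr1.
Qed.

Lemma deltastar_set0 w y : deltastar w y set0 = \sum_(b < r) Dop (w b) (y [set b]).
Proof.
rewrite /deltastar sum_ffunE; apply: eq_bigr => b _.
by rewrite iotaE inE setU0 ffunE /nlt big_set0 mul1r.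
Qed.

Lemma anticommutator_scale_one v w f :
  (dstar v (deltastar w (ext_scale f one)) + deltastar w (dstar v (ext_scale f one))) set0
  = \sum_(b < r) Dop (w b) (Dop (v b) f).
Proof.
rewrite deltastar_scale_one dstar0 add0r deltastar_set0.
by apply: eq_bigr => b _; rewrite dstar_scale_one_set1.
Qed.

Lemma sign_homog k : ((-1) ^+ k : P) \is 0.-homog.
Proof.
have sign1 : (-1 : P) \is 0.-homog by rewrite rpredN dhomog1.
by have := dhomogMn k sign1; rewrite mul0n.
Qed.

Lemma grade_invol_homog e x : ext_homog e x -> ext_homog e (grade_invol x).
Proof.
move=> hx S; rewrite grade_involE => nz.
have [|le_Se hS] := hx S; first by apply: contraNneq nz => ->; rewrite mulr0.
by split=> //; rewrite -[(e - _)%N]add0n dhomogM ?sign_homog.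
Qed.

Lemma contract_homog w d e x : (forall a, w a \is d.-homog) -> ext_homog e x ->
  ext_homog (e.-1 + d) (contract w x).
Proof.
move=> hw hx T; rewrite /contract sum_ffunE => nz.
have hxT a : a \notin T -> x (a |: T) != 0 ->
    (#|T| < e)%N /\ x (a |: T) \is (e - #|T|.+1)%N.-homog.
  by move=> aT /hx; rewrite cardsU1 aT add1n.
have [lt_Te|le_eT] := ltnP #|T| e.
  split; first by lia.
  apply: rpred_sum => a _; rewrite ext_scaleE iotaE.
  case: ifPn => aT; first by rewrite mulr0 dhomog0.
  have [->|/(hxT a aT) [_ hxa]] := eqVneq (x (a |: T)) 0; first by rewrite !mulr0 dhomog0.
  have -> : (e.-1 + d - #|T| = d + (0 + (e - #|T|.+1)))%N by lia.
  by rewrite dhomogM ?dhomogM ?sign_homog.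
case/eqP: nz; apply: big1 => a _; rewrite ext_scaleE iotaE.
case: ifPn => aT; first by rewrite mulr0.
have [->|/(hxT a aT) [lt_Te _]] := eqVneq (x (a |: T)) 0; first by rewrite !mulr0.
by rewrite leqNgt lt_Te in le_eT.
Qed.
End Exterior.

Section Equivariance.
Variables (F : fieldType) (n r : nat) (gT : finGroupType) (G : {group gT}).
Variables (rV : mx_representation F G n) (rM : mx_representation F G r).
Local Notation P := {mpoly F[n]}.
Local Notation E := (ext F n r).
Local Notation one := (ext_one F n r).
Local Notation act g := (actS (rV g)).
Implicit Types (x y : E) (S T : {set 'I_r}) (a b s : 'I_r) (w : {ffun 'I_r -> P}).
Implicit Types (g : gT).

HB.instance Definition _ (A : 'M[F]_n) :=
  GRing.RMorphism.copy (actS A) (comp_mpoly [tuple \sum_(l < n) A k l *: 'X_l | k < n]).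

Definition act_gen g s : E := ext1 (fun b => (rM g s b)%:MP).
Definition act_wedge g (L : seq 'I_r) : E := \big[@wedge F n r/one]_(s <- L) act_gen g s.
(* g . m_a^* = sum_c rM g^-1 c a m_c^*, the contragredient action. *)
Definition act_dual_gen g a : {ffun 'I_r -> P} := [ffun c => (rM (g^-1)%g c a)%:MP].

Lemma actEE g x : actE rV rM g x = \sum_S ext_scale (act g (x S)) (act_wedge g (enum S)).
Proof. by []. Qed.

Lemma grade_invol_one : grade_invol one = one.
Proof.
apply/ffunP => S; rewrite grade_involE ffunE.
by case: eqP => [->|]; rewrite ?cards0 ?mul1r ?mulr0.
Qed.

Lemma grade_invol_act_wedge g L :
  grade_invol (act_wedge g L) = ext_scale ((-1) ^+ size L) (act_wedge g L).
Proof.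
elim: L => [|s L IHL]; first by rewrite /act_wedge big_nil grade_invol_one ext_scale1.
rewrite /act_wedge big_cons -/(act_wedge g L) grade_invol_wedge grade_invol_ext1 IHL.
by rewrite wedge_scalel wedge_scaler ext_scaleA exprS.
Qed.

Lemma actE_grade_invol g x : actE rV rM g (grade_invol x) = grade_invol (actE rV rM g x).
Proof.
rewrite !actEE raddf_sum; apply: eq_bigr => S _ /=.
rewrite grade_involE rmorphM rmorph_sign grade_invol_scale grade_invol_act_wedge.
by rewrite ext_scaleA -cardE mulrC.
Qed.

Lemma contract_dual_gen g a s : g \in G ->
  contract (act_dual_gen g a) (act_gen g s) = ext_scale (s == a)%:R one.
Proof.
move=> gG; rewrite /contract; under eq_bigr do rewrite iota_ext1 ext_scaleA ffunE -rmorphM.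
rewrite -ext_scale_suml -rmorph_sum -mpolyC_nat; congr (ext_scale _%:MP _).
have -> : \sum_(i < r) rM (g^-1)%g i a * rM g s i = (rM g *m rM (g^-1)%g) s a.
  by rewrite mxE; apply: eq_bigr => i _; rewrite mulrC.
by rewrite -repr_mxM ?groupV // mulgV repr_mx1 mxE.
Qed.

Local Notation ord_lt := (fun u v : 'I_r => (u < v)%N).

Lemma contract_act_wedge g a L : g \in G -> sorted ord_lt L ->
  contract (act_dual_gen g a) (act_wedge g L) =
  if a \in L then ext_scale ((-1) ^+ count (fun u : 'I_r => (u < a)%N) L) (act_wedge g (rem a L))
  else 0.
Proof.
move=> gG; elim: L => [|s L IHL] sL; first by rewrite /act_wedge big_nil contract_one.
have sortL : sorted ord_lt L by apply: path_sorted sL.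
have lt_sL : all (ord_lt s) L by apply: order_path_min sL => u v t; apply: ltn_trans.
rewrite /act_wedge big_cons -/(act_wedge g L) contract_wedge contract_dual_gen //.
rewrite grade_invol_ext1 IHL // wedge_scalel wedge1l wedge_scalel in_cons.
have [<-|neq_sa] := eqVneq s a.
  have sL' : s \notin L by apply/negP => /(allP lt_sL); rewrite /= ltnn.
  rewrite (negbTE sL') !raddf0 addr0 /= eqxx ltnn add0n mulr1n ext_scale1 -/(act_wedge g L).
  rewrite (@eq_in_count _ _ pred0) ?count_pred0 ?ext_scale1 // => u /(allP lt_sL) /=.
  by rewrite ltnNge => /negbTE; apply: contraFF => /ltnW.
rewrite ext_scale0l add0r /=.
case: ifP => aL; last by rewrite !raddf0.
rewrite wedge_scaler ext_scaleA (negbTE neq_sa) /act_wedge big_cons.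
by rewrite (allP lt_sL a aL) exprS.
Qed.

Lemma enum_setE S : enum S = [seq u <- enum 'I_r | u \in S].
Proof. by rewrite {1}/enum_mem -enumT. Qed.

Lemma sorted_enum_set S : sorted ord_lt (enum S).
Proof.
rewrite enum_setE; apply: sorted_filter => [u v t|]; first exact: ltn_trans.
by have := iota_ltn_sorted 0 r; rewrite -val_enum_ord sorted_map.
Qed.

Lemma count_enum_set S a : count (fun u : 'I_r => (u < a)%N) (enum S) = nlt S a.
Proof.
rewrite /nlt -big_enum /=.
by elim: (enum S) => [|u l IHl]; rewrite ?big_nil // big_cons /= IHl.
Qed.

Lemma rem_enum_set S a : rem a (enum S) = enum (S :\ a).
Proof.
rewrite !enum_setE rem_filter ?filter_uniq -?enumT ?enum_uniq // -filter_predI.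
by apply: eq_filter => u; rewrite !inE.
Qed.

Lemma contract_act_wedge_enum g a S : g \in G ->
  contract (act_dual_gen g a) (act_wedge g (enum S)) =
  if a \in S then ext_scale ((-1) ^+ nlt S a) (act_wedge g (enum (S :\ a))) else 0.
Proof.
by move=> gG; rewrite contract_act_wedge ?sorted_enum_set // mem_enum count_enum_set rem_enum_set.
Qed.

Lemma contract_actMs g w y :
  contract (actMs rV rM g w) y = \sum_a ext_scale (act g (w a)) (contract (act_dual_gen g a) y).
Proof.
rewrite /contract; under eq_bigr do rewrite ffunE ext_scale_suml.
rewrite exchange_big /=; apply: eq_bigr => a _; rewrite raddf_sum; apply: eq_bigr => c _ /=.
by rewrite ffunE ext_scaleA -mul_mpolyC mulrC.
Qed.

Lemma actE_contract g w x : g \in G ->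
  actE rV rM g (contract w x) = contract (actMs rV rM g w) (actE rV rM g x).
Proof.
move=> gG; rewrite contract_actMs !actEE.
under eq_bigr do rewrite contractE rmorph_sum ext_scale_suml.
rewrite exchange_big /=; apply: eq_bigr => a _.
rewrite (raddf_sum (contract (act_dual_gen g a))) raddf_sum /=.
under [RHS]eq_bigr do rewrite contract_scale contract_act_wedge_enum //.
rewrite (bigID (fun S => a \in S)) /= [X in X + _]big1 ?add0r => [|T aT]; last first.
  by rewrite iotaE aT mulr0 rmorph0 ext_scale0l.
rewrite [RHS](bigID (fun S => a \in S)) /= [X in _ = _ + X]big1 ?addr0 => [|S aS]; last first.
  by rewrite (negbTE aS) !raddf0.
rewrite [RHS](eq_bigl (fun S => true && (a \in S))) // big_sets_mem /=.
apply: eq_bigr => T aT; rewrite setU11 setU1K // nlt_setU1 iotaE (negbTE aT).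
by rewrite !ext_scaleA !rmorphM rmorph_sign; congr ext_scale; ring.
Qed.

Lemma invE_grade_invol x : invE rV rM x -> invE rV rM (grade_invol x).
Proof. by move=> ix g gG; rewrite actE_grade_invol ix. Qed.

Lemma invE_contract w x : invMs rV rM w -> invE rV rM x -> invE rV rM (contract w x).
Proof. by move=> iw ix g gG; rewrite actE_contract // iw // ix. Qed.
End Equivariance.

Section IdealJ.
Variables (F : fieldType) (n r : nat) (gT : finGroupType) (G : {group gT}).
Variables (rV : mx_representation F G n) (rM : mx_representation F G r).
Local Notation E := (ext F n r).
Local Notation inJ := (inJ rV rM).
Implicit Types (x y : E).

Definition ord_cat T k1 k2 (f1 : 'I_k1 -> T) (f2 : 'I_k2 -> T) (i : 'I_(k1 + k2)) : T :=
  match split i with inl j => f1 j | inr j => f2 j end.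

Lemma ord_cat_lshift T k1 k2 f1 f2 (j : 'I_k1) : @ord_cat T k1 k2 f1 f2 (lshift k2 j) = f1 j.
Proof. by rewrite /ord_cat (unsplitK (inl _ : 'I_k1 + 'I_k2)). Qed.

Lemma ord_cat_rshift T k1 k2 f1 f2 (j : 'I_k2) : @ord_cat T k1 k2 f1 f2 (rshift k1 j) = f2 j.
Proof. by rewrite /ord_cat (unsplitK (inr _ : 'I_k1 + 'I_k2)). Qed.

Lemma inJ0 : inJ 0.
Proof.
by exists 0%N, (fun _ => 0), (fun _ => 0), (fun _ => 0); split=> [[]|]; rewrite ?big_ord0.
Qed.

Lemma inJD x y : inJ x -> inJ y -> inJ (x + y).
Proof.
move=> [k1 [a1 [b1 [c1 [hb1 ->]]]]] [k2 [a2 [b2 [c2 [hb2 ->]]]]].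
exists (k1 + k2)%N, (ord_cat a1 a2), (ord_cat b1 b2), (ord_cat c1 c2); split.
  by move=> i; rewrite /ord_cat; case: (split i).
rewrite big_split_ord; congr (_ + _); apply: eq_bigr => j _.
  by rewrite !ord_cat_lshift.
by rewrite !ord_cat_rshift.
Qed.

Lemma inJ_sum k (f : 'I_k -> E) : (forall i, inJ (f i)) -> inJ (\sum_(i < k) f i).
Proof.
elim: k f => [|k IHk] f hf; first by rewrite big_ord0; apply: inJ0.
by rewrite big_ord_recr /=; apply: inJD => //; apply: IHk.
Qed.

Lemma inJ_generator x b y e : invE rV rM b -> (0 < e)%N -> ext_homog e b ->
  inJ (wedge (wedge x b) y).
Proof.
move=> ib e_gt0 hb; exists 1%N, (fun _ => x), (fun _ => b), (fun _ => y).
by split; [move=> _; split=> //; exists e | rewrite big_ord1].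
Qed.

Lemma inJ_contract w d xi : invMs rV rM w -> (forall a, w a \is d.-homog) -> (0 < d)%N ->
  inJ xi -> inJ (contract w xi).
Proof.
move=> iw hw d_gt0 [k [x [b [y [hb ->]]]]]; rewrite raddf_sum /=; apply: inJ_sum => i.
have [ib [e e_gt0 hbe]] := hb i.
rewrite contract_wedge contract_wedge wedgeDl grade_invol_wedge; apply: inJD; first apply: inJD.
- exact: inJ_generator ib e_gt0 hbe.
- apply: (@inJ_generator _ _ _ (e.-1 + d)); [exact: invE_contract | lia | exact: contract_homog].
- exact: (inJ_generator _ _ (invE_grade_invol ib) e_gt0 (grade_invol_homog hbe)).
Qed.

End IdealJ.

Section PositiveDegree.
Variables (F : fieldType) (n r : nat) (gT : finGroupType) (G : {group gT}).
Variables (rV : mx_representation F G n) (rM : mx_representation F G r).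
Local Notation P := {mpoly F[n]}.
Implicit Types (g : gT) (x : {ffun 'I_r -> P}).
Implicit Types (inv : {ffun 'I_r -> P} -> Prop) (w : 'I_r -> {ffun 'I_r -> P}).

Lemma homog0_mpolyC (p : P) : p \is 0.-homog -> p = (p@_0)%:MP.
Proof.
move=> hp; apply/mpolyP => m; rewrite mcoeffC.
have [->|nm] := eqVneq m 0%MM; first by rewrite mulr1.
by rewrite mulr0 (dhomog_nemf_coeff hp) // mdeg_eq0.
Qed.

Lemma hom_basis_neq0 inv w i : hom_basis rV inv w -> w i != 0.
Proof.
case=> _ _ _ free_w; apply/eqP => wi0.
suff : ((i == i)%:R : P) = 0 by rewrite eqxx => /eqP; rewrite oner_eq0.
apply: (free_w (fun k => (k == i)%:R)) => [k g _|]; first by rewrite /actS rmorph_nat.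
apply/ffunP => a; rewrite !ffunE (bigD1 i) //= eqxx mul1r wi0 ffunE add0r.
by rewrite big1 // => k /negbTE ->; rewrite mul0r.
Qed.

Lemma hom_basis_deg_gt0 inv w i d : hom_basis rV inv w ->
  (forall x, inv x -> (forall a, x a \is 0.-homog) -> x = 0) ->
  (forall a, w i a \is d.-homog) -> (0 < d)%N.
Proof.
move=> hw inv_homog0 hwi; case: d hwi => // hwi; have [inv_w _ _ _] := hw.
by case/eqP: (hom_basis_neq0 i hw); apply: inv_homog0.
Qed.

Lemma actM_const g (c : 'rV[F]_r) :
  Defs.actM rV rM g [ffun a => (c 0 a)%:MP] = [ffun b => ((c *m rM g) 0 b)%:MP].
Proof.
apply/ffunP => b; rewrite !ffunE mxE raddf_sum; apply: eq_bigr => a _.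
by rewrite ffunE /actS comp_mpolyC -mul_mpolyC -rmorphM mulrC.
Qed.

Lemma actMs_const g (c : 'cV[F]_r) :
  actMs rV rM g [ffun a => (c a 0)%:MP] = [ffun b => ((rM (g^-1)%g *m c) b 0)%:MP].
Proof.
apply/ffunP => b; rewrite !ffunE mxE raddf_sum; apply: eq_bigr => a _.
by rewrite ffunE /actS comp_mpolyC -mul_mpolyC -rmorphM.
Qed.

Lemma invM_homog0_eq0 x : no_fixed_points rM -> invM rV rM x ->
  (forall a, x a \is 0.-homog) -> x = 0.
Proof.
move=> nf ix hx; pose c := \row_a (x a)@_0.
have def_x : x = [ffun a => (c 0 a)%:MP].
  by apply/ffunP => a; rewrite ffunE mxE -homog0_mpolyC.
have c0 : c = 0.
  apply: nf => g gG; apply/rowP => b; have := ix g gG.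
  by rewrite def_x actM_const => /ffunP/(_ b); rewrite !ffunE => /(can_inj (@mpolyCK n F)).
by rewrite def_x c0; apply/ffunP => a; rewrite !ffunE mxE.
Qed.

Lemma no_fixed_points_dual : [pchar F] =i pred0 -> no_fixed_points rM ->
  forall u : 'cV[F]_r, (forall g, g \in G -> rM g *m u = u) -> u = 0.
Proof.
move=> F0 nf u fix_u; pose avg := \sum_(h in G) rM h.
have avg_fix g : g \in G -> avg *m rM g = avg.
  move=> gG; rewrite mulmx_suml (eq_bigr (fun h => rM (h * g)%g)) => [|h hG].
    by rewrite [RHS](reindex_inj (mulIg g)) /=; apply: eq_bigl => h; rewrite groupMr.
  by rewrite repr_mxM.
have avg0 : avg = 0.
  by apply/row_matrixP => a; rewrite row0; apply: nf => g gG; rewrite -row_mul avg_fix.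
have : avg *m u = #|G|%:R *: u.
  by rewrite mulmx_suml (eq_bigr (fun _ => u)) => [|h hG]; rewrite ?sumr_const ?scaler_nat ?fix_u.
rewrite avg0 mul0mx => /esym /eqP; rewrite scaler_eq0 => /orP [|/eqP //].
by rewrite ((pcharf0P F).1 F0) eqn0Ngt cardG_gt0.
Qed.

Lemma invMs_homog0_eq0 x : [pchar F] =i pred0 -> no_fixed_points rM -> invMs rV rM x ->
  (forall a, x a \is 0.-homog) -> x = 0.
Proof.
move=> F0 nf ix hx; pose c := \col_a (x a)@_0.
have def_x : x = [ffun a => (c a 0)%:MP].
  by apply/ffunP => a; rewrite ffunE mxE -homog0_mpolyC.
have c0 : c = 0.
  apply: no_fixed_points_dual => // g gG; apply/colP => b; have := ix _ (groupVr gG).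
  by rewrite def_x actMs_const invgK => /ffunP/(_ b); rewrite !ffunE => /(can_inj (@mpolyCK n F)).
by rewrite def_x c0; apply/ffunP => a; rewrite !ffunE mxE.
Qed.

End PositiveDegree.

Theorem corollary5p6 (F : fieldType) (n r : nat) (gT : finGroupType)
  (G : {group gT}) (rV : mx_representation F G n) (rM : mx_representation F G r)
  (wMs wM : 'I_r -> {ffun 'I_r -> {mpoly F[n]}}) :
  [pchar F] =i pred0 ->
  mx_faithful rV ->
  (G :=: <<[set g in G | pseudo_reflection (rV g)]>>)%g ->
  no_fixed_points rM ->
  hom_basis rV (invMs rV rM) wMs ->
  hom_basis rV (invM rV rM) wM ->
  (forall (i j : 'I_r) (L : {mpoly F[n]}),
     invS rV L ->
     (forall x : ext F n r,
        dstar (wMs i) (deltastar (wM j) x) + deltastar (wM j) (dstar (wMs i) x)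
        = ext_map (Dop L) x) ->
     exists2 d, (0 < d)%N & L \is d.-homog)
  /\
  (forall (i : 'I_r) (x : ext F n r),
     harmonic rV rM x -> harmonic rV rM (dstar (wMs i) x)).
Proof.
(* Faithfulness and generation by pseudo-reflections are what make the free
   bases wMs and wM exist. *)
move=> F0 _ _ nf hwMs hwM; have [iwMs homMs _ _] := hwMs; have [_ homM _ _] := hwM.
split=> [i j L _ anticomm | i x hx xi Jxi].
  have [d1 hd1] := homMs i; have [d2 hd2] := homM j.
  have d2_gt0 := hom_basis_deg_gt0 hwM (fun x => invM_homog0_eq0 nf) hd2.
  have DopL f : Dop L f = Dop (\sum_(b < r) wM j b * wMs i b) f.
    have := congr1 (fun y : ext F n r => y set0) (anticomm (ext_scale f (ext_one F n r))).
    rewrite anticommutator_scale_one !ffunE eqxx mulr1 => <-.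
    by rewrite Dop_suml //; apply: eq_bigr => b _; rewrite DopM.
  exists (d2 + d1)%N; first by rewrite addn_gt0 d2_gt0.
  by rewrite (Dop_inj F0 DopL); apply: rpred_sum => b _; apply: dhomogM.
rewrite extpair_dstar; apply: hx; have [d hd] := homMs i.
apply: (inJ_contract (iwMs i) hd _ Jxi).
exact: hom_basis_deg_gt0 hwMs (fun x => invMs_homog0_eq0 F0 nf) hd.
Qed.
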